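(* Let $0\le j<n$ and let $(\mu^k)_{k\ge0}$ be the $\lambda^{j^*}$-building functions. For every transition $\mathbf e=(c,w,c')\in\mathcal E_j$ and every $i\in[n]$, $\mu^{|V|}_i(\mathbf e)\le|V|\cdot\kappa$, where $\kappa=\max_{e\in E}\ell_e(n)$.
   Context: Dynamic NCG $(\mathcal A,n)$: arena $\mathcal A=(V,E,\mathsf{src},\mathsf{tgt})$, $V$ finite, $E$ a partial function from $V\times V$ to non-decreasing piecewise-affine functions $\mathbb N\to\mathbb N$ (edge $e$ has cost $\ell_e$); $\mathsf{tgt}$ has only a self-loop of cost $0$ and is reachable from all states; players $[n]$. Configurations are maps $[n]\to V$; $c_{\mathsf{tgt}}$ maps all to $\mathsf{tgt}$. A move vector $(e_i)_i$ from $c$ gives the transition $(c,w,c')$, $c'(i)$ the target of $e_i$, $w(i)=\ell_{e_i}(u_i)$ with $u_i=|\{l:e_l=e_i\}|$; $\mathrm{cost}_i(c,c')=w(i)$; $T$ is the set of transitions; $c\Rightarrow c'$ means $(c,w,c')\in T$. For a path $\rho=(t_k)$, $\rho_{\ge k}$ is its suffix from $t_k$ and $\mathrm{cost}_i(\rho)$ the total payment of $i$. $\mathrm{dev}_i(c,c')=\{c''\mid c\Rightarrow c'',\ c''(l)=c'(l)\ \forall l\ne i\}$. $X_m$: configurations with exactly $m$ players at $\mathsf{tgt}$; $X_{\ge m}=\bigcup_{m'\ge m}X_{m'}$; $\mathcal E_m$, $\mathcal E_{\ge m}$: transitions $(c,w,c')$ with $c\in X_m$, resp. $c\in X_{\ge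 m}$. For $\lambda=(\lambda_i)$, $\lambda_i:\mathcal E_{\ge m}\to\mathbb N\cup\{\pm\infty\}$, and $c\in X_{\ge m}$, $\Lambda_\lambda(c)$ is the set of paths $\rho=(t_k)$ from $c$ visiting $c_{\mathsf{tgt}}$ with $\mathrm{cost}_i(\rho_{\ge k})\le\lambda_i(t_k)$ for all $i,k$. Define $\lambda^{n^*}_i(c_{\mathsf{tgt}},0^n,c_{\mathsf{tgt}})=0$; for $j<n$ the $\lambda^{j^*}$-building functions $\mu^k_i:\mathcal E_{\ge j}\to\mathbb N\cup\{\pm\infty\}$ are: $\mu^k_i=\lambda^{(j+1)^*}_i$ on $\mathcal E_{\ge j+1}$; for $\mathbf e=(c,w,c')\in\mathcal E_j$, $\mu^0_i(\mathbf e)=0$ if $c(i)=\mathsf{tgt}$ else $+\infty$; for $k>0$, $\mu^k_i(\mathbf e)=0$ if $c(i)=\mathsf{tgt}$, otherwise $\min_{c''\in\mathrm{dev}_i(c,c')}\sup_{\rho\in\Lambda_{\mu^{k-1}}(c'')}(\mathrm{cost}_i(c,c'')+\mathrm{cost}_i(\rho))$ if $\Lambda_{\mu^{k-1}}(\tilde c)\ne\emptyset$ for all $(c,\tilde w,\tilde c)\in T$, and $-\infty$ otherwise; $\lambda^{j^*}$ is the pointwise limit of $(\mu^k)_k$. *)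

From HB Require Import structures.
From mathcomp Require Import all_boot all_order all_algebra.
From mathcomp Require Import all_classical all_reals all_analysis.
From mathcomp Require Import Rstruct Rstruct_topology.
Set Implicit Arguments. Unset Strict Implicit. Unset Printing Implicit Defensive.
Import Order.TTheory GRing.Theory Num.Theory.

Local Open Scope classical_set_scope.
Local Open Scope ring_scope.
Local Open Scope ereal_scope.

Notation eR := (\bar (Rdefinitions.R : realType)).

(* piecewise affine: finitely many breakpoints [bs]; on each piece (indexed by
   the number of breakpoints <= x) f is x |-> a*x + b with a b : nat *)
Definition pw_affine (f : nat -> nat) : Prop :=
  exists (bs : seq nat) (coef : nat -> nat * nat), forall x : nat,
    f x = ((coef (count (fun t => t <= x)%N bs)).1 * x
           + (coef (count (fun t => t <= x)%N bs)).2)%N.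

Definition nondecr (f : nat -> nat) : Prop := forall x y, (x <= y)%N -> (f x <= f y)%N.

Section NCG.
Variables (V : finType) (E : V -> V -> option (nat -> nat)) (tgt : V) (n : nat).

Definition edge_rel : rel V := fun u v => isSome (E u v).

Definition arena_ok : Prop :=
  [/\ forall u v f, E u v = Some f -> nondecr f /\ pw_affine f,
      (exists f, E tgt tgt = Some f /\ forall x, f x = 0%N),
      (forall v, v != tgt -> E tgt v = None) &
      (forall v, connect edge_rel v tgt)].

Definition config := {ffun 'I_n -> V}.
Definition c_tgt : config := [ffun => tgt].

Definition trans (c c' : config) : bool := [forall i, edge_rel (c i) (c' i)].

Definition load (c c' : config) (i : 'I_n) : nat :=
  #|[set l | (c l == c i) && (c' l == c' i)]|.

Definition cost (c c' : config) (i : 'I_n) : nat :=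
  match E (c i) (c' i) with Some f => f (load c c' i) | None => 0%N end.

Definition ntgt (c : config) : nat := #|[set i | c i == tgt]|.

Definition dev (i : 'I_n) (c c' c'' : config) : bool :=
  trans c c'' && [forall l, (l != i) ==> (c'' l == c' l)].

(* a function lambda_i on transitions, represented on pairs (c, c')
   (the weight vector w is determined by c and c') *)
Definition tfun := config -> config -> 'I_n -> eR.

Definition is_path (c : config) (rho : nat -> config) : Prop :=
  rho 0%N = c /\ forall k, trans (rho k) (rho k.+1).

Definition cost_from (rho : nat -> config) (k : nat) (i : 'I_n) : eR :=
  ereal_sup (range (fun N : nat =>
    ((\sum_(k <= t < N) cost (rho t) (rho t.+1) i)%N%:R)%:E)).

Definition Lambda (lam : tfun) (c : config) : set (nat -> config) :=
  [set rho | is_path c rho /\ (exists N, rho N = c_tgt) /\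
     forall i k, cost_from rho k i <= lam (rho k) (rho k.+1) i].

(* the lambda^{m*}-building functions mu^k, given prev = lambda^{(m+1)*} *)
Fixpoint mu (m : nat) (prev : tfun) (k : nat) : tfun :=
  fun c c' i =>
    if (m < ntgt c)%N then prev c c' i
    else match k with
    | 0%N => if c i == tgt then 0 else +oo
    | k'.+1 =>
      if c i == tgt then 0 else
      if `[< forall ct, trans c ct -> Lambda (mu m prev k') ct !=set0 >] then
        \big[Order.min/+oo]_(c'' | dev i c c' c'')
          ereal_sup [set ((cost c c'' i)%:R)%:E + cost_from rho 0%N i
                    | rho in Lambda (mu m prev k') c'']
      else -oo
    end.

(* lambda^{(n-d)*}: lambda^{n*} is 0 (on the unique transition of E_n);
   lambda^{m*} is the pointwise limit of its building functions. *)
Fixpoint lamd (d : nat) : tfun :=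
  match d with
  | 0%N => fun _ _ _ => 0
  | d'.+1 => fun c c' i => limn (fun k => mu (n - d'.+1) (lamd d') k c c' i)
  end.

Definition lam_star (m : nat) : tfun := lamd (n - m).

Definition kappa : nat :=
  (\max_(u : V) \max_(v : V) match E u v with Some f => f n | None => 0 end)%N.

End NCG.

From HB Require Import structures.
From mathcomp Require Import all_boot all_order all_algebra.
From mathcomp Require Import all_classical all_reals all_analysis.
From mathcomp Require Import Rstruct Rstruct_topology.
Set Implicit Arguments. Unset Strict Implicit.
Import Order.TTheory GRing.Theory Num.Theory.
Local Open Scope ring_scope.
Local Open Scope ereal_scope.
Local Open Scope classical_set_scope.

(* Every edge cost paid by one player is at most kappa, since costs are
   nondecreasing and an edge carries at most n players.  If player i is N edges
   away from tgt, it can deviate along the first edge of such a walk; by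
   induction on k this bounds mu^k_i by N * kappa whenever N <= k, the first
   edge costing at most kappa and the constraint of Lambda bounding the rest of
   the path by mu^{k-1}_i at the next configuration, where i is N - 1 edges
   away.  Transitions with more players at tgt are governed by lambda^{(j+1)*},
   which satisfies the same bound by an outer induction: it is the limit of
   nonincreasing building functions, hence below each of them.  Finally,
   shortest walks to tgt have at most |V| edges. *)

Lemma ereal_nonincreasing_cvgn_ge (R : realType) (u : (\bar R)^nat) :
  nonincreasing_seq u -> forall N, limn u <= u N.
Proof.
move=> u_ni N; rewrite (cvg_lim _ (ereal_nonincreasing_cvgn u_ni)) //.
exact: ereal_inf_lbound.
Qed.

Section BuildingFunctionBound.
Variables (V : finType) (E : V -> V -> option (nat -> nat)) (tgt : V) (n : nat).

Definition walk_to_tgt (v : V) (N : nat) : Prop :=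
  exists p : seq V, [/\ path (edge_rel E) v p, last v p = tgt & size p = N].

Definition redirect (c' : config V n) (i : 'I_n) (w : V) : config V n :=
  [ffun l => if l == i then w else c' l].

Lemma redirect_id c' i w : redirect c' i w i = w.
Proof. by rewrite ffunE eqxx. Qed.

Lemma dev_redirect (c c' : config V n) i w :
  trans E c c' -> edge_rel E (c i) w -> dev E i c c' (redirect c' i w).
Proof.
move=> /forallP cc' ciw; apply/andP; split.
  by apply/forallP => l; rewrite ffunE; case: eqP => [->|_].
by apply/forallP => l; apply/implyP => /negbTE li; rewrite ffunE li.
Qed.

Lemma sub_Lambda (lam1 lam2 : tfun V n) c :
  (forall a b i, lam1 a b i <= lam2 a b i) ->
  Lambda E tgt lam1 c `<=` Lambda E tgt lam2 c.
Proof.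
by move=> le12 rho [rho_path [rho_tgt rho_le]]; do 2 split => //;
  move=> i k; exact: le_trans (rho_le i k) (le12 _ _ _).
Qed.

Lemma mu_succ_le m prev k c c' i :
  @mu V E tgt n m prev k.+1 c c' i <= @mu V E tgt n m prev k c c' i.
Proof.
elim: k c c' i => [|k IHk] c c' i /=.
  by case: ifP => // _; case: ifP => // _; exact: leey.
case: ifP => // _; case: ifP => // _.
have sub_k := fun ct => @sub_Lambda _ _ ct IHk.
case: (asboolP (forall ct, trans E c ct ->
  Lambda E tgt (@mu V E tgt n m prev k.+1) ct !=set0)) => [Lambda_ne|_]; last first.
  exact: leNye.
case: asboolP => [_|[]]; last first.
  by move=> ct /Lambda_ne [rho /sub_k rho_in]; exists rho.
apply: le_bigmin; first exact: leey.
move=> c'' dev_c''; apply: le_trans (bigmin_le_cond _ _ dev_c'') _.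
by apply: ereal_sup_le; apply: image_subset; exact: sub_k.
Qed.

Lemma mu_nonincreasing m prev c c' i :
  nonincreasing_seq (fun k => @mu V E tgt n m prev k c c' i).
Proof. by apply/nonincreasing_seqP => k; exact: mu_succ_le. Qed.

Section CostBounds.
Hypothesis cost_nondecr : forall u v f, E u v = Some f -> nondecr f.
Hypothesis tgt_absorbing : forall v, v != tgt -> E tgt v = None.

Lemma cost_le_kappa (c c'' : config V n) i : (cost E c c'' i <= kappa E n)%N.
Proof.
apply: (bigop.bigmax_sup (c i)) => //; apply: (bigop.bigmax_sup (c'' i)) => //.
rewrite /cost; case: (E (c i) (c'' i)) (@cost_nondecr (c i) (c'' i)) => [f f_nd|//].
by apply: f_nd => //; apply: leq_trans (max_card _) _; rewrite card_ord.
Qed.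

Lemma ntgt_trans (c c' : config V n) :
  trans E c c' -> (ntgt tgt c <= ntgt tgt c')%N.
Proof.
move=> /forallP cc'; apply: subset_leq_card; apply/fintype.subsetP => l.
rewrite !inE /= => /eqP cl; have := cc' l; rewrite cl /edge_rel.
by have [|/tgt_absorbing ->] := eqVneq (c' l) tgt.
Qed.

Lemma mu_le_walk m prev i :
  (forall c c' N, trans E c c' -> (m < ntgt tgt c)%N -> walk_to_tgt (c i) N ->
     prev c c' i <= ((N * kappa E n)%N%:R)%:E) ->
  forall k c c' N, trans E c c' -> (m <= ntgt tgt c)%N ->
     walk_to_tgt (c i) N -> (N <= k)%N ->
     @mu V E tgt n m prev k c c' i <= ((N * kappa E n)%N%:R)%:E.
Proof.
move=> prev_le; elim=> [|k IHk] c c' N cc' m_le [p [ci_p p_tgt p_size]] N_le /=.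
all: case: ifP => [m_lt|_]; first by apply: prev_le => //; exists p.
  move: N_le; rewrite -p_size leqn0 => /nilP p0.
  by move: p_tgt; rewrite p0 /= => ->; rewrite eqxx lee_fin.
case: ifP => [_|ci_tgt]; first by rewrite lee_fin.
case: asboolP => _; last exact: leNye.
case: p ci_p p_tgt p_size => [_ /= ci|w p /= /andP [ci_w w_p] p_tgt p_size].
  by rewrite ci eqxx in ci_tgt.
have dev_c0 := dev_redirect cc' ci_w; set c0 := redirect c' i w in dev_c0 *.
apply: le_trans (bigmin_le_cond _ _ dev_c0) _.
apply: ge_ereal_sup => _ [rho [[rho0 rho_trans] [_ rho_le]] <-].
have rest_le : @mu V E tgt n m prev k c0 (rho 1%N) i <= ((size p * kappa E n)%N%:R)%:E.
  apply: IHk; first by rewrite -rho0; exact: rho_trans.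
  - exact: leq_trans m_le (ntgt_trans (andP dev_c0).1).
  - by exists p; rewrite redirect_id.
  - by rewrite -ltnS p_size.
rewrite -p_size mulSn natrD EFinD; apply: leeD.
  by rewrite lee_fin ler_nat cost_le_kappa.
by apply: le_trans rest_le; have := rho_le i 0%N; rewrite rho0.
Qed.

Lemma lamd_le_walk d : (d <= n)%N ->
  forall (c c' : config V n) i N, trans E c c' -> (n - d <= ntgt tgt c)%N ->
    walk_to_tgt (c i) N -> @lamd V E tgt n d c c' i <= ((N * kappa E n)%N%:R)%:E.
Proof.
elim: d => [|d IHd] d_le c c' i N cc' nd_le ci_N /=; first by rewrite lee_fin.
apply: le_trans (ereal_nonincreasing_cvgn_ge (mu_nonincreasing _ _ _ _ _) N) _.
apply: mu_le_walk => // a b M ab lt_ntgt a_M; apply: IHd => //; first exact: ltnW.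
by rewrite subnSK in lt_ntgt.
Qed.

End CostBounds.

Lemma short_walk_to_tgt v :
  connect (edge_rel E) v tgt -> exists2 N, walk_to_tgt v N & (N <= #|V|)%N.
Proof.
move=> /connectP [p p_path p_tgt]; case: (shortenP p_path) p_tgt => q q_path q_uniq _ q_tgt.
exists (size q); first by exists q.
by apply: leq_trans (max_card (mem (v :: q))); rewrite (card_uniqP q_uniq).
Qed.

End BuildingFunctionBound.

Theorem lemmaC7 (V : finType) (E : V -> V -> option (nat -> nat)) (tgt : V)
  (n : nat) (j : nat) :
  arena_ok E tgt ->
  (j < n)%N ->
  forall (c c' : config V n), trans E c c' -> ntgt tgt c = j ->
  forall i : 'I_n,
    @mu V E tgt n j (@lam_star V E tgt n j.+1) #|V| c c' i
      <= ((#|V| * kappa E n)%N%:R)%:E.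
Proof.
move=> [cost_ok _ tgt_absorbing tgt_reachable] lt_jn c c' cc' ntgt_c i.
have cost_nondecr u v f (Euv : E u v = Some f) := (cost_ok u v f Euv).1.
have [N ci_N N_le] := short_walk_to_tgt (tgt_reachable (c i)).
apply: le_trans (mu_le_walk cost_nondecr tgt_absorbing _ cc' _ ci_N N_le) _.
- move=> a b M ab lt_ntgt a_M; apply: lamd_le_walk => //; first exact: leq_subr.
  by rewrite subKn.
- by rewrite ntgt_c.
- by rewrite lee_fin ler_nat leq_mul2r N_le orbT.
Qed.
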